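(* Let $\varphi=\nu\tilde n.\sigma$ be a frame well-formed with respect to $\mathtt{s}\in\tilde n$ and let $q_{\mathtt{s}}$ be an occurrence (position) of $\mathtt{s}$ in $y\sigma$ for some $y\in\mathrm{dom}(\sigma)$. If $\varphi\nvdash\mathtt{s}$ then there exists a position $q<q_{\mathtt{s}}$ (strict prefix) such that the head symbol of $y\sigma|_q$ is $\mathsf{enc}$ or $\mathsf{enca}$ and $q\cdot1\le q_{\mathtt{s}}$.
   Context: Terms over $\Sigma=\{\mathsf{enc}/3,\mathsf{dec}/2,\mathsf{enca}/3,\mathsf{deca}/2,\mathsf{pub}/1,\mathsf{priv}/1,\langle\cdot,\cdot\rangle/2,\pi_1/1,\pi_2/1,\mathsf{sign}/2,\mathsf{check}/3,\mathsf{retrieve}/1\}$, constants, names and variables; destructors are $\pi_1,\pi_2,\mathsf{dec},\mathsf{deca},\mathsf{check},\mathsf{retrieve}$. Equational theory $E$: $\pi_i(\langle z_1,z_2\rangle)=z_i$, $\mathsf{dec}(\mathsf{enc}(z_1,z_2,z_3),z_2)=z_1$, $\mathsf{deca}(\mathsf{enca}(z_1,\mathsf{pub}(z_2),z_3),\mathsf{priv}(z_2))=z_1$, $\mathsf{check}(z_1,\mathsf{sign}(z_1,\mathsf{priv}(z_2)),\mathsf{pub}(z_2))=\mathsf{ok}$, $\mathsf{retrieve}(\mathsf{sign}(z_1,z_2))=z_1$. Positions are sequences of positive integers ordered by prefix $\le$, $T|_p$ the subterm at $p$. A frame $\varphi=\nu\tilde n.\sigma$: finite set of restricted names and acyclic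 substitution. $\varphi\vdash M$: least relation containing $x\sigma$ ($x\in\mathrm{dom}(\sigma)$) and names outside $\tilde n$, closed under application of any symbol other than $\mathsf{priv}$ and under $=_E$. An encryption occurrence $q$ in $U$ (head of $U|_q$ in $\{\mathsf{enc},\mathsf{enca}\}$) is an agent encryption w.r.t. names $\tilde m$ if $U|_{q\cdot3}\in\tilde m$, and a probabilistic encryption w.r.t. a set of terms $S$ if for all $V\in S$ and $p$ with $V|_p=U|_{q\cdot3}$, $p=q'\cdot3$ with $V|_{q'}=U|_q$. $\varphi$ is well-formed w.r.t. $\mathtt{s}$ if (1) every encryption in $\sigma$ is an agent encryption w.r.t. $\tilde n\setminus\{\mathtt{s}\}$ and a probabilistic encryption w.r.t. $\mathrm{ran}(\sigma)$; (2) for all subterms $\mathsf{enc}(M,K,R)$, $\mathsf{enca}(M',K',R')$, $\mathsf{sign}(U,V)$, $\mathsf{pub}(W)$, $\mathsf{priv}(W')$ of $\varphi$, $\mathtt{s}$ does not occur in $K,K',V,W,W',R,R'$; (3) $\varphi$ contains no destructor. *)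

From Stdlib Require List.
From mathcomp Require Import all_boot.
Set Implicit Arguments. Unset Strict Implicit. Unset Printing Implicit Defensive.

Inductive sym : Type :=
  | Enc | Dec | Enca | Deca | Pub | Priv | Pair | Proj1 | Proj2
  | Sign | Check | Retrieve.

Definition arity (f : sym) : nat :=
  match f with
  | Enc | Enca | Check => 3
  | Dec | Deca | Pair | Sign => 2
  | Pub | Priv | Proj1 | Proj2 | Retrieve => 1
  end.

Definition is_destructor (f : sym) : Prop :=
  f = Proj1 \/ f = Proj2 \/ f = Dec \/ f = Deca \/ f = Check \/ f = Retrieve.

Inductive term : Type :=
  | TName of nat
  | TVar of nat
  | TCst of nat
  | TApp of sym & seq term.

Definition ok : term := TCst 0.

Fixpoint well_arity (t : term) : bool :=
  match t with
  | TApp f l => (size l == arity f) && all well_arity l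
  | _ => true
  end.

(* Positions: sequences of positive integers; T|_p as a partial function. *)
Fixpoint subterm_at (t : term) (p : seq nat) : option term :=
  match p with
  | [::] => Some t
  | i :: p' =>
      match t with
      | TApp _ l => if (0 < i) && (i <= size l)
                    then subterm_at (nth t l i.-1) p' else None
      | _ => None
      end
  end.

Definition head_sym (t : term) : option sym :=
  match t with TApp f _ => Some f | _ => None end.

Definition occurs (s : nat) (K : term) : Prop :=
  exists p, subterm_at K p = Some (TName s).

Inductive eqE : term -> term -> Prop :=
  | eqE_refl t : eqE t t
  | eqE_sym t u : eqE t u -> eqE u t
  | eqE_trans t u v : eqE t u -> eqE u v -> eqE t v
  | eqE_cong f l1 l2 a b : eqE a b ->
      eqE (TApp f (l1 ++ a :: l2)) (TApp f (l1 ++ b :: l2))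
  | eqE_proj1 z1 z2 : eqE (TApp Proj1 [:: TApp Pair [:: z1; z2]]) z1
  | eqE_proj2 z1 z2 : eqE (TApp Proj2 [:: TApp Pair [:: z1; z2]]) z2
  | eqE_dec z1 z2 z3 : eqE (TApp Dec [:: TApp Enc [:: z1; z2; z3]; z2]) z1
  | eqE_deca z1 z2 z3 :
      eqE (TApp Deca [:: TApp Enca [:: z1; TApp Pub [:: z2]; z3];
                         TApp Priv [:: z2]]) z1
  | eqE_check z1 z2 :
      eqE (TApp Check [:: z1; TApp Sign [:: z1; TApp Priv [:: z2]];
                          TApp Pub [:: z2]]) ok
  | eqE_retrieve z1 z2 : eqE (TApp Retrieve [:: TApp Sign [:: z1; z2]]) z1.

(* Frames nu n~ . sigma.  The substitution is represented in solved form: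
   fsub associates to each x in dom(sigma) the term x sigma. *)
Record frame := Frame { fnames : seq nat; fsub : seq (nat * term) }.

Fixpoint lookup (s : seq (nat * term)) (x : nat) : option term :=
  match s with
  | [::] => None
  | (y, t) :: s' => if y == x then Some t else lookup s' x
  end.

Definition dom (phi : frame) : seq nat := map fst (fsub phi).

Definition in_ran (phi : frame) (t : term) : Prop :=
  exists x, lookup (fsub phi) x = Some t.

Fixpoint vars (t : term) : seq nat :=
  match t with
  | TVar x => [:: x]
  | TApp _ l => flatten (map vars l)
  | _ => [::]
  end.

Definition valid_frame (phi : frame) : Prop :=
  uniq (dom phi) /\
  (forall t, in_ran phi t -> well_arity t /\ forall x, x \in vars t -> x \notin dom phi).

Inductive deduc (phi : frame) : term -> Prop :=
  | ded_var x t : lookup (fsub phi) x = Some t -> deduc phi t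
  | ded_name n : n \notin fnames phi -> deduc phi (TName n)
  | ded_cst c : deduc phi (TCst c)
  | ded_app f l : f <> Priv -> size l = arity f ->
      (forall u, List.In u l -> deduc phi u) -> deduc phi (TApp f l)
  | ded_eq t u : deduc phi t -> eqE t u -> deduc phi u.

Definition enc_occ (U : term) (q : seq nat) : Prop :=
  exists t, subterm_at U q = Some t /\ (head_sym t = Some Enc \/ head_sym t = Some Enca).

Definition agent_enc (m : seq nat) (U : term) (q : seq nat) : Prop :=
  exists n, subterm_at U (q ++ [:: 3]) = Some (TName n) /\ n \in m.

Definition prob_enc (S : term -> Prop) (U : term) (q : seq nat) : Prop :=
  forall V p, S V -> subterm_at V p = subterm_at U (q ++ [:: 3]) ->
    subterm_at V p <> None ->
    exists q', p = q' ++ [:: 3] /\ subterm_at V q' = subterm_at U q.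

Definition subterm_of_frame (phi : frame) (u : term) : Prop :=
  exists t p, in_ran phi t /\ subterm_at t p = Some u.

Definition well_formed (phi : frame) (s : nat) : Prop :=
  (forall U q, in_ran phi U -> enc_occ U q ->
     agent_enc [seq n <- fnames phi | n != s] U q /\ prob_enc (in_ran phi) U q) /\
  (forall M K R, subterm_of_frame phi (TApp Enc [:: M; K; R]) ->
     ~ occurs s K /\ ~ occurs s R) /\
  (forall M K R, subterm_of_frame phi (TApp Enca [:: M; K; R]) ->
     ~ occurs s K /\ ~ occurs s R) /\
  (forall U V, subterm_of_frame phi (TApp Sign [:: U; V]) -> ~ occurs s V) /\
  (forall W, subterm_of_frame phi (TApp Pub [:: W]) -> ~ occurs s W) /\
  (forall W, subterm_of_frame phi (TApp Priv [:: W]) -> ~ occurs s W) /\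
  (forall f l, subterm_of_frame phi (TApp f l) -> ~ is_destructor f).

From Pilot Require Import Defs.
From mathcomp Require Import all_boot.

(* Walk down from the root of [y sigma] towards the occurrence of [s], keeping
   the invariant that the current subterm is deducible.  Well-formedness rules
   out destructors and any occurrence of [s] in a key, randomness, signing key,
   [pub] or [priv] argument; the arguments of pairs and the message of a
   signature are deducible from the term by [pi_1], [pi_2] and [retrieve].
   Since [s] itself is not deducible, the walk must at some point enter the
   plaintext of an encryption. *)

Lemma subterm_at_cat {t u : term} {r : seq nat} (p : seq nat) :
  subterm_at t r = Some u -> subterm_at t (r ++ p) = subterm_at u p.
Proof.
elim: r t => [|i r IHr] t /=; first by case=> ->.
by case: t => // f l; case: ifP => // _; apply: IHr.
Qed.

Lemma subterm_at_cons_inv {t w : term} {i : nat} {p : seq nat} :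
  subterm_at t (i :: p) = Some w ->
  exists2 c, subterm_at t [:: i] = Some c & subterm_at c p = Some w.
Proof. by case: t => // f l /=; case: ifP => // _; exists (nth (TApp f l) l i.-1). Qed.

Lemma well_arity_subterm_at {t u : term} {p : seq nat} :
  well_arity t -> subterm_at t p = Some u -> well_arity u.
Proof.
elim: p t => [|i p IHp] t; first by move=> wa_t [<-].
case: t => // f l /= /andP[_ /all_nthP wa_l].
case: ifP => // /andP[i_gt0 i_le] /IHp; apply.
by apply: wa_l; rewrite prednK.
Qed.

Lemma deduc_destruct {phi : frame} {g : sym} {t u : term} :
  g <> Priv -> arity g = 1 ->
  deduc phi t -> Defs.eqE (TApp g [:: t]) u -> deduc phi u.
Proof. by move=> g_priv g_un dt; apply: ded_eq; apply: ded_app => // v [<-|[]]. Qed.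

Lemma deduc_child_or_plaintext {phi : frame} {s i : nat} {u c : term} :
  well_formed phi s -> subterm_of_frame phi u -> well_arity u -> deduc phi u ->
  subterm_at u [:: i] = Some c -> occurs s c ->
  (i = 1 /\ (head_sym u = Some Enc \/ head_sym u = Some Enca)) \/ deduc phi c.
Proof.
case=> [_ [wf_enc [wf_enca [wf_sign [wf_pub [wf_priv wf_destr]]]]]] sub_u.
case: u sub_u => // f l sub_u /= /andP[/eqP size_l _] du.
have not_destr := wf_destr _ _ sub_u.
case: ifP => // /andP[i_gt0 i_le] [<-] s_c.
case: f size_l sub_u du not_destr s_c => size_l sub_u du not_destr s_c;
  try by exfalso; apply: not_destr; rewrite /is_destructor; tauto.
all: case: l size_l sub_u du i_le s_c => [|a [|b [|d [|? ?]]]] //= _ sub_u du i_le s_c.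
all: case: i i_gt0 i_le s_c => [|[|[|[|?]]]] //= _ _ s_c.
- by left; split; [|left].
- by case: (wf_enc _ _ _ sub_u).
- by case: (wf_enc _ _ _ sub_u).
- by left; split; [|right].
- by case: (wf_enca _ _ _ sub_u).
- by case: (wf_enca _ _ _ sub_u).
- by case: (wf_pub _ sub_u).
- by case: (wf_priv _ sub_u).
- by right; apply: deduc_destruct du (eqE_proj1 a b).
- by right; apply: deduc_destruct du (eqE_proj2 a b).
- by right; apply: deduc_destruct du (eqE_retrieve a b).
- by case: (wf_sign _ _ sub_u).
Qed.

Lemma plaintext_above_secret {phi : frame} {s : nat} {t u : term} {r p : seq nat} :
  well_formed phi s -> in_ran phi t -> well_arity t -> ~ deduc phi (TName s) ->
  subterm_at t r = Some u -> deduc phi u -> subterm_at u p = Some (TName s) ->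
  exists q v, [/\ prefix (q ++ [:: 1]) (r ++ p), subterm_at t q = Some v &
    (head_sym v = Some Enc \/ head_sym v = Some Enca)].
Proof.
move=> wf ran_t wa_t nds.
elim: p r u => [|i p IHp] r u t_r du /=; first by case=> u_s; case: nds; rewrite -u_s.
case/subterm_at_cons_inv=> c u_i c_p.
have sub_u : subterm_of_frame phi u by exists t, r.
have wa_u := well_arity_subterm_at wa_t t_r.
have s_c : occurs s c by exists p.
case: (deduc_child_or_plaintext wf sub_u wa_u du u_i s_c) => [[-> enc_u]|dc].
  exists r, u; split=> //.
  by rewrite -[r ++ 1 :: p]/(r ++ [:: 1] ++ p) catA prefix_prefix.
have t_ri : subterm_at t (r ++ [:: i]) = Some c by rewrite (subterm_at_cat _ t_r).
by rewrite -[r ++ i :: p]/(r ++ [:: i] ++ p) catA; apply: IHp t_ri dc c_p.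
Qed.

Theorem lemma2p11 (phi : frame) (s y : nat) (t : term) (qs : seq nat) :
  valid_frame phi ->
  s \in fnames phi ->
  well_formed phi s ->
  lookup (fsub phi) y = Some t ->
  subterm_at t qs = Some (TName s) ->
  ~ deduc phi (TName s) ->
  exists q u, [/\ prefix q qs, q != qs,
    subterm_at t q = Some u,
    (head_sym u = Some Enc \/ head_sym u = Some Enca) &
    prefix (q ++ [:: 1]) qs].
Proof.
move=> [_ ran_valid] _ wf t_y t_qs nds.
have ran_t : in_ran phi t by exists y.
have [wa_t _] := ran_valid _ ran_t.
have [q [u [q1_qs t_q enc_u]]] :=
  plaintext_above_secret wf ran_t wa_t nds (erefl : subterm_at t [::] = Some t)
    (ded_var t_y) t_qs.
exists q, u; split=> //; first exact: catl_prefix q1_qs.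
by apply: contraTneq (size_prefix q1_qs) => ->; rewrite size_cat addn1 ltnn.
Qed.
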